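(* Let $A$ be a skew brace. If every ideal of $A$ has finite weight, then $\mathrm{Spec}\,A$ with the spectral topology is a Noetherian topological space (its closed subsets satisfy the descending chain condition).
   Context: A (left) skew brace is a triple $(A,+,\circ)$ where $(A,+)$ and $(A,\circ)$ are groups such that $a\circ(b+c)=a\circ b-a+a\circ c$ for all $a,b,c$; common identity $e$. Put $\lambda_a(b)=-a+a\circ b$, $a*b=-a+a\circ b-b$. An ideal is a normal subgroup $I$ of both $(A,+)$ and $(A,\circ)$ with $\lambda_a(I)\subseteq I$ for all $a$. The weight of an ideal (as a skew brace) is the minimal number of elements needed to generate it as an ideal; an ideal has finite weight if it is generated as an ideal by finitely many elements (equivalently, all ideals have finite weight iff every ascending chain of ideals of $A$ stabilizes). For subsets $I,J$, $I*J=\{i*j\mid i\in I,j\in J\}$. A prime ideal is a proper ideal $P$ such that for any subsets $I,J$ of $A$, $I*J\subseteq P$ implies $I\subseteq P$ or $J\subseteq P$; $\mathrm{Spec}\,A$ is the set of prime ideals. The spectral topology on $\mathrm{Spec}\,A$ has closed sets $H(I)=\{P\in\mathrm{Spec}\,A\mid I\subseteq P\}$, $I$ an ideal. *)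

From Stdlib Require Import List Arith.

Record SkewBrace := {
  sb_carrier :> Type;
  sb_add : sb_carrier -> sb_carrier -> sb_carrier;
  sb_opp : sb_carrier -> sb_carrier;
  sb_e : sb_carrier;                       (* common identity of (A,+) and (A,o) *)
  sb_circ : sb_carrier -> sb_carrier -> sb_carrier;
  sb_cinv : sb_carrier -> sb_carrier;
  sb_addA : forall a b c, sb_add a (sb_add b c) = sb_add (sb_add a b) c;
  sb_add0l : forall a, sb_add sb_e a = a;
  sb_add0r : forall a, sb_add a sb_e = a;
  sb_addNl : forall a, sb_add (sb_opp a) a = sb_e;
  sb_addNr : forall a, sb_add a (sb_opp a) = sb_e;
  sb_circA : forall a b c, sb_circ a (sb_circ b c) = sb_circ (sb_circ a b) c;
  sb_circ1l : forall a, sb_circ sb_e a = a;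
  sb_circ1r : forall a, sb_circ a sb_e = a;
  sb_circVl : forall a, sb_circ (sb_cinv a) a = sb_e;
  sb_circVr : forall a, sb_circ a (sb_cinv a) = sb_e;
  sb_compat : forall a b c,
    sb_circ a (sb_add b c) = sb_add (sb_add (sb_circ a b) (sb_opp a)) (sb_circ a c)
}.

Arguments sb_add {s}. Arguments sb_opp {s}. Arguments sb_e {s}.
Arguments sb_circ {s}. Arguments sb_cinv {s}.

Section Defs.
Variable A : SkewBrace.

Definition sb_lambda (a b : A) : A := sb_add (sb_opp a) (sb_circ a b).
Definition sb_star (a b : A) : A :=
  sb_add (sb_add (sb_opp a) (sb_circ a b)) (sb_opp b).

Definition is_ideal (I : A -> Prop) : Prop :=
  I sb_e /\
  (forall x y, I x -> I y -> I (sb_add x y)) /\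
  (forall x, I x -> I (sb_opp x)) /\
  (forall a x, I x -> I (sb_add (sb_add a x) (sb_opp a))) /\
  (forall x y, I x -> I y -> I (sb_circ x y)) /\
  (forall x, I x -> I (sb_cinv x)) /\
  (forall a x, I x -> I (sb_circ (sb_circ a x) (sb_cinv a))) /\
  (forall a x, I x -> I (sb_lambda a x)).

Definition ideal_gen (X : A -> Prop) (x : A) : Prop :=
  forall J, is_ideal J -> (forall y, X y -> J y) -> J x.

Definition finite_weight (I : A -> Prop) : Prop :=
  exists l : list A, forall x, I x <-> ideal_gen (fun y => In y l) x.

Definition is_prime (P : A -> Prop) : Prop :=
  is_ideal P /\ (exists x, ~ P x) /\
  forall I J : A -> Prop,
    (forall i j, I i -> J j -> P (sb_star i j)) ->
    (forall i, I i -> P i) \/ (forall j, J j -> P j).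

(* Subsets of Spec A are predicates on subsets of A (we only look at their prime members). *)
Definition spec_H (I : A -> Prop) (P : A -> Prop) : Prop :=
  is_prime P /\ forall x, I x -> P x.

Definition spec_closed (C : (A -> Prop) -> Prop) : Prop :=
  exists I, is_ideal I /\ forall P, C P <-> spec_H I P.

Definition spec_noetherian : Prop :=
  forall C : nat -> (A -> Prop) -> Prop,
    (forall n, spec_closed (C n)) ->
    (forall n P, C (S n) P -> C n P) ->
    exists N, forall n, N <= n -> forall P, C n P <-> C N P.

End Defs.

(* A closed set C = H(I) of Spec A is recovered from the ideal of the elements
   lying in every prime of C, and shrinking C enlarges that ideal.  A descending
   chain of closed sets thus yields an ascending chain of ideals; the union of the
   latter is an ideal, finitely generated by hypothesis, so all its generators
   already lie in one member of the chain and the chain is stationary. *)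
From Stdlib Require Import List Arith Lia.

Lemma chain_le {T : Type} (K : nat -> T -> Prop) :
  (forall n x, K n x -> K (S n) x) ->
  forall n m x, n <= m -> K n x -> K m x.
Proof.
  intros Hsucc n m x Hle Hx.
  induction Hle as [|m _ IH]; auto.
Qed.

Lemma chain_bound_list {T : Type} (K : nat -> T -> Prop) :
  (forall n x, K n x -> K (S n) x) ->
  forall l : list T, (forall y, In y l -> exists n, K n y) ->
  exists N, forall y, In y l -> K N y.
Proof.
  intros Hsucc l; induction l as [|a l IH]; intros Hl.
  - exists 0; intros y [].
  - destruct IH as [N HN]; [intros y Hy; apply Hl; right; exact Hy|].
    destruct (Hl a (or_introl eq_refl)) as [n Hn].
    exists (max n N); intros y [<-|Hy].
    + apply (chain_le K Hsucc n); [lia|exact Hn].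
    + apply (chain_le K Hsucc N); [lia|exact (HN y Hy)].
Qed.

Section SkewBraceIdeals.
Variable A : SkewBrace.

Lemma is_ideal_bigcap (F : (A -> Prop) -> Prop) :
  (forall J, F J -> is_ideal A J) ->
  is_ideal A (fun x => forall J, F J -> J x).
Proof.
  intros Hid; repeat split; repeat intro;
    match goal with HJ : F ?J |- _ =>
      destruct (Hid J HJ) as (? & ? & ? & ? & ? & ? & ? & ?);
      repeat match goal with Hx : forall J', F J' -> J' _ |- _ =>
        specialize (Hx J HJ) end
    end;
    auto.
Qed.

Lemma is_ideal_chain_union (K : nat -> A -> Prop) :
  (forall n, is_ideal A (K n)) ->
  (forall n x, K n x -> K (S n) x) ->
  is_ideal A (fun x => exists n, K n x).
Proof.
  intros Hid Hsucc.
  assert (Hup := chain_le K Hsucc).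
  repeat split.
  - exists 0; apply (Hid 0).
  - intros x y [n Hx] [m Hy]; exists (max n m).
    apply (Hid (max n m)); [apply (Hup n)|apply (Hup m)]; auto; lia.
  - intros x [n Hx]; exists n; apply (Hid n), Hx.
  - intros a x [n Hx]; exists n; apply (Hid n), Hx.
  - intros x y [n Hx] [m Hy]; exists (max n m).
    apply (Hid (max n m)); [apply (Hup n)|apply (Hup m)]; auto; lia.
  - intros x [n Hx]; exists n; apply (Hid n), Hx.
  - intros a x [n Hx]; exists n; apply (Hid n), Hx.
  - intros a x [n Hx]; exists n; apply (Hid n), Hx.
Qed.

Lemma ideal_gen_min (X J : A -> Prop) :
  is_ideal A J -> (forall y, X y -> J y) -> forall x, ideal_gen A X x -> J x.
Proof. intros HJ HXJ x Hx; exact (Hx J HJ HXJ). Qed.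

Lemma ideal_gen_sub (X : A -> Prop) : forall x, X x -> ideal_gen A X x.
Proof. intros x Hx J _ HXJ; exact (HXJ x Hx). Qed.

Lemma ascending_chain_stationary (K : nat -> A -> Prop) :
  (forall I, is_ideal A I -> finite_weight A I) ->
  (forall n, is_ideal A (K n)) ->
  (forall n x, K n x -> K (S n) x) ->
  exists N, forall n, N <= n -> forall x, K n x <-> K N x.
Proof.
  intros Hfw Hid Hsucc.
  destruct (Hfw _ (is_ideal_chain_union K Hid Hsucc)) as [l Hl].
  destruct (chain_bound_list K Hsucc l) as [N HN].
  { intros y Hy; apply Hl, ideal_gen_sub, Hy. }
  exists N; intros n Hn x; split.
  - intros Hx.
    exact (ideal_gen_min _ _ (Hid N) HN x (proj1 (Hl x) (ex_intro _ n Hx))).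
  - apply (chain_le K Hsucc N n x Hn).
Qed.

Definition spec_ideal (C : (A -> Prop) -> Prop) (x : A) : Prop :=
  forall P, C P -> P x.

Lemma spec_closed_ideal (C : (A -> Prop) -> Prop) :
  spec_closed A C -> is_ideal A (spec_ideal C).
Proof.
  intros [I [_ HI]]; apply is_ideal_bigcap.
  intros P HP; apply HI in HP; exact (proj1 (proj1 HP)).
Qed.

Lemma spec_closed_H_ideal (C : (A -> Prop) -> Prop) :
  spec_closed A C -> forall P, C P <-> spec_H A (spec_ideal C) P.
Proof.
  intros [I [_ HI]] P; split.
  - intros HP; split; [exact (proj1 (proj1 (HI P) HP))|].
    intros x Hx; exact (Hx P HP).
  - intros [Hprime HP]; apply HI; split; [exact Hprime|].
    intros x Hx; apply HP; intros Q HQ; exact (proj2 (proj1 (HI Q) HQ) x Hx).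
Qed.

Lemma spec_H_ext (I J : A -> Prop) :
  (forall x, I x <-> J x) -> forall P, spec_H A I P <-> spec_H A J P.
Proof.
  intros HIJ P; split; intros [Hprime HP]; split; auto;
    intros x Hx; apply HP, HIJ, Hx.
Qed.

End SkewBraceIdeals.

Theorem proposition4p20 (A : SkewBrace) :
  (forall I : A -> Prop, is_ideal A I -> finite_weight A I) ->
  spec_noetherian A.
Proof.
  intros Hfw C Hcl Hdec.
  destruct (ascending_chain_stationary A (fun n => spec_ideal A (C n)) Hfw
              (fun n => spec_closed_ideal A (C n) (Hcl n))
              (fun n x Hx P HP => Hx P (Hdec n P HP))) as [N HN].
  exists N; intros n Hn P.
  rewrite (spec_closed_H_ideal A (C n) (Hcl n) P),
          (spec_closed_H_ideal A (C N) (Hcl N) P).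
  apply spec_H_ext, HN, Hn.
Qed.
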